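(* Assume (A1)–(A3) below. The overidentifying restrictions hold, i.e. there is $\beta_0\in\mathbb R$ with $\mathbb E[(Y_i-\beta_0D_i)(Z_{\ell i}-p_\ell)]=0$ for all $\ell=1,\dots,L$, if and only if $\mathrm{Wald}_1=\mathrm{Wald}_2=\cdots=\mathrm{Wald}_L$. Equivalently, $\mathrm{Wald}_1=\cdots=\mathrm{Wald}_L$ holds if and only if there exists $\beta_0$ such that $\sum_{t\in\mathcal T}\alpha_t(\ell)(\mathrm{LATE}_t-\beta_0)=0$ for every $\ell$.
   Context: Observe i.i.d. $(Y_i,D_i,\mathbf Z_i)$, $D_i\in\{0,1\}$, $\mathbf Z_i=(Z_{1i},\dots,Z_{Li})'\in\{0,1\}^L$, $L\ge2$. Units have potential outcomes $Y_i(0),Y_i(1)$ and a compliance type $D_i(\cdot):\{0,1\}^L\to\{0,1\}$, $D_i=D_i(\mathbf Z_i)$, $Y_i=D_iY_i(1)+(1-D_i)Y_i(0)$; $\mathcal T$ is the set of types, $\theta_t=P(D_i(\cdot)=t)$, $\mathrm{LATE}_t=\mathbb E[Y_i(1)-Y_i(0)\mid D_i(\cdot)=t]$, and $t(z_\ell,z_{-\ell})$ is type $t$'s treatment at the instrument vector with $\ell$-th coordinate $z_\ell$ and others $z_{-\ell}$. $p_\ell=P(Z_{\ell i}=1)$, $\pi_\ell,\rho_\ell$ are the differences in $\mathbb E[D_i\mid Z_{\ell i}=z]$ and $\mathbb E[Y_i\mid Z_{\ell i}=z]$ between $z=1$ and $z=0$, $\mathrm{Wald}_\ell=\rho_\ell/\pi_\ell$,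 $\Sigma_Z=\mathrm{Var}(\mathbf Z_i)$. $q_\ell(z_{-\ell})=P(Z_{-\ell}=z_{-\ell}\mid Z_\ell=1)$, $q^0_\ell(z_{-\ell})=P(Z_{-\ell}=z_{-\ell}\mid Z_\ell=0)$, $\varphi_t(\ell)=\sum_{z_{-\ell}}[t(1,z_{-\ell})q_\ell(z_{-\ell})-t(0,z_{-\ell})q^0_\ell(z_{-\ell})]$, $\alpha_t(\ell)=\theta_t\varphi_t(\ell)/\pi_\ell$. Assumptions: (A1) $(Y_i(0),Y_i(1),D_i(\cdot))$ independent of $\mathbf Z_i$. (A2) $D_i(z)$ nondecreasing in each coordinate for every $i$. (A3) $p_\ell>0$, $\pi_\ell>0$ for all $\ell$; $\Sigma_Z$ positive definite. (The paper phrases the first part as: the Hansen $J$-test of overidentifying restrictions is a joint test of $H_0:\mathrm{Wald}_1=\cdots=\mathrm{Wald}_L$.) *)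

From HB Require Import structures.
From mathcomp Require Import all_boot all_order all_algebra.
From mathcomp Require Import all_classical all_reals all_analysis.
Set Implicit Arguments. Unset Strict Implicit. Unset Printing Implicit Defensive.
Import Order.TTheory GRing.Theory Num.Theory.
Local Open Scope classical_set_scope.
Local Open Scope ring_scope.

Definition ivec (L : nat) := {ffun 'I_L -> bool}.
Definition ctype (L : nat) := {ffun ivec L -> bool}.

Definition setc (L : nat) (z : ivec L) (l : 'I_L) (b : bool) : ivec L :=
  [ffun j => if j == l then b else z j].

Section Model.
Context {R : realType} {d : measure_display} {Omega : measurableType d}.
Variable P : probability Omega R.
Variable L : nat.
Variables (Y0 Y1 : Omega -> R) (Dt : Omega -> ctype L) (Z : Omega -> ivec L).

Definition Pr (A : set Omega) : R := fine (P A).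
Definition Ex (f : Omega -> R) : R := fine (\int[P]_w (f w)%:E).
Definition bR (b : bool) : R := (b : nat)%:R.
Definition ind (A : set Omega) (w : Omega) : R := bR (`[< A w >]).

Definition Dobs (w : Omega) : bool := Dt w (Z w).
Definition Yobs (w : Omega) : R := if Dobs w then Y1 w else Y0 w.

Definition condE (f : Omega -> R) (A : set Omega) : R :=
  Ex (fun w => f w * ind A w) / Pr A.

Definition Zev (l : 'I_L) (b : bool) : set Omega := [set w | Z w l = b].

Definition pZ (l : 'I_L) : R := Pr (Zev l true).
Definition piZ (l : 'I_L) : R :=
  condE (fun w => bR (Dobs w)) (Zev l true) - condE (fun w => bR (Dobs w)) (Zev l false).
Definition rhoZ (l : 'I_L) : R :=
  condE Yobs (Zev l true) - condE Yobs (Zev l false).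
Definition Wald (l : 'I_L) : R := rhoZ l / piZ l.

Definition SigmaZ : 'M[R]_L :=
  \matrix_(j, k) (Ex (fun w => bR (Z w j) * bR (Z w k))
                  - Ex (fun w => bR (Z w j)) * Ex (fun w => bR (Z w k))).

Definition theta (t : ctype L) : R := Pr [set w | Dt w = t].
Definition LATE (t : ctype L) : R :=
  condE (fun w => Y1 w - Y0 w) [set w | Dt w = t].

(* q_l(z_{-l}) (b = true) and q^0_l(z_{-l}) (b = false); z_{-l} is represented
   by any z : ivec L, only its coordinates j != l matter *)
Definition qZ (l : 'I_L) (b : bool) (z : ivec L) : R :=
  Pr [set w | Z w l = b /\ forall j, j != l -> Z w j = z j] / Pr (Zev l b).

(* sum over z_{-l} in {0,1}^{L-1}: each z_{-l} is represented exactly once by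
   the vector z with z l = false *)
Definition phiT (t : ctype L) (l : 'I_L) : R :=
  \sum_(z : ivec L | ~~ z l)
     (bR (t (setc z l true)) * qZ l true z - bR (t (setc z l false)) * qZ l false z).

Definition alphaT (t : ctype L) (l : 'I_L) : R := theta t * phiT t l / piZ l.

(* (A1): (Y(0), Y(1), D(.)) independent of Z; stated on the generating
   pi-system of rectangles (Borel B1 x Borel B2 x {t}) and the atoms {Z = z} *)
Definition A1_indep : Prop :=
  forall (B1 B2 : set R) (t : ctype L) (z : ivec L),
    measurable B1 -> measurable B2 ->
    Pr [set w | B1 (Y0 w) /\ B2 (Y1 w) /\ Dt w = t /\ Z w = z]
    = Pr [set w | B1 (Y0 w) /\ B2 (Y1 w) /\ Dt w = t] * Pr [set w | Z w = z].

Definition A2_monotone : Prop :=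
  forall w (z : ivec L) (l : 'I_L), (Dt w (setc z l false) ==> Dt w (setc z l true)).

Definition A3_relevance : Prop :=
  (forall l, 0 < pZ l /\ 0 < piZ l) /\
  (forall v : 'cV[R]_L, v != 0 -> 0 < (v^T *m SigmaZ *m v) ord0 ord0).

Definition model_regular : Prop :=
  P.-integrable setT (EFin \o Y0) /\ P.-integrable setT (EFin \o Y1) /\
  (forall t, measurable (Dt @^-1` [set t])) /\
  (forall z, measurable (Z @^-1` [set z])).

Definition overid : Prop :=
  exists beta0 : R, forall l : 'I_L,
    Ex (fun w => (Yobs w - beta0 * bR (Dobs w)) * (bR (Z w l) - pZ l)) = 0.

Definition wald_equal : Prop := forall l l' : 'I_L, Wald l = Wald l'.

Definition late_restriction : Prop :=
  exists beta0 : R, forall l : 'I_L,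
    \sum_(t : ctype L) alphaT t l * (LATE t - beta0) = 0.

End Model.

From HB Require Import structures.
From mathcomp Require Import all_boot all_order all_algebra.
From mathcomp Require Import all_classical all_reals all_analysis.
From mathcomp Require Import measurable_realfun ring.
Set Implicit Arguments. Unset Strict Implicit. Unset Printing Implicit Defensive.
Import Order.TTheory GRing.Theory Num.Theory.
Local Open Scope classical_set_scope.
Local Open Scope ring_scope.

(** For a binary instrument, [Cov(W, Z_l) = p_l (1 - p_l) (E[W | Z_l = 1] - E[W | Z_l = 0])],
    so [E[(Y - b D)(Z_l - p_l)] = p_l (1 - p_l) (rho_l - b pi_l)]: the overidentifying
    restrictions hold iff a single [b] solves [rho_l = b pi_l] for all [l], i.e. iff all Wald
    ratios coincide.
    Under (A1), splitting [Omega] into the cells [{D(.) = t, Z = z}] turns [E[Y - b D | Z_l]]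
    into an average over [z] of [sum_t (E[Y(0) 1_t] + t(z) theta_t (LATE_t - b))], whence
    [rho_l - b pi_l = sum_t theta_t (LATE_t - b) phi_t(l) = pi_l sum_t alpha_t(l) (LATE_t - b)],
    and the LATE restriction is the same system of equations. *)

Section Expectation.
Context {R : realType} {d : measure_display} {Omega : measurableType d}.
Variable P : probability Omega R.

Definition integrableR (f : Omega -> R) := P.-integrable setT (EFin \o f).

Lemma indE (A : set Omega) : ind (R:=R) A = \1_A.
Proof. by apply/funext => w; rewrite /ind /bR indicE. Qed.

Lemma Pr_EFin (A : set Omega) : measurable A -> (Pr P A)%:E = P A.
Proof. by move=> mA; rewrite /Pr fineK // fin_num_measure. Qed.

Lemma Pr_ge0 (A : set Omega) : 0 <= Pr P A.
Proof. exact/fine_ge0/measure_ge0. Qed.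

Lemma Ex_EFin f : integrableR f -> (Ex P f)%:E = (\int[P]_w (f w)%:E)%E.
Proof. by move=> h; rewrite /Ex fineK // integrable_fin_num. Qed.

Lemma Ex_ext f g : f =1 g -> Ex P f = Ex P g.
Proof. by move=> /funext ->. Qed.

Lemma integrableR_measurable f : integrableR f -> measurable_fun setT f.
Proof. by move/(measurable_int _)/measurable_EFinP. Qed.

Lemma integrableR_preimage f B : integrableR f -> measurable B ->
  measurable (f @^-1` B).
Proof.
by move=> /integrableR_measurable mf mB; rewrite -[_ @^-1` _]setTI; exact: mf.
Qed.

Lemma integrableR_add f g :
  integrableR f -> integrableR g -> integrableR (fun w => f w + g w).
Proof. by move=> hf hg; apply: eq_integrable (integrableD _ hf hg). Qed.

Lemma integrableR_scale k f : integrableR f -> integrableR (fun w => k * f w).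
Proof. by move=> hf; apply: eq_integrable (integrableZl _ k hf). Qed.

Lemma integrableR_sum (I : Type) (s : seq I) (p : pred I) (F : I -> Omega -> R) :
  (forall i, integrableR (F i)) ->
  integrableR (fun w => \sum_(i <- s | p i) F i w).
Proof.
move=> hF; elim: s => [|i s IH].
  by under eq_fun do rewrite big_nil; exact: integrable0.
under eq_fun do rewrite big_cons; case: (p i) => //.
exact: integrableR_add.
Qed.

Lemma integrableR_subZ f g (b : R) : integrableR f -> integrableR g ->
  integrableR (fun w => f w - b * g w).
Proof.
by move=> hf hg; apply: eq_integrable (integrableB _ hf (integrableZl _ b hg)).
Qed.

Lemma integrableR_ind A : measurable A -> integrableR (ind A).
Proof. by move=> mA; rewrite /integrableR indE; exact: integrable_indic. Qed.

Lemma integrableR_cst1 : integrableR (fun=> 1).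
Proof.
have -> : (fun=> 1) = ind (R:=R) (@setT Omega).
  by apply/funext => w; rewrite indE indicE in_setT.
exact: integrableR_ind.
Qed.

Lemma integrableR_mulind Y A : integrableR Y -> measurable A ->
  integrableR (fun w => Y w * ind A w).
Proof.
move=> hY mA; have mY := measurable_int _ hY.
apply: le_integrable hY => //.
  apply/measurable_EFinP/measurable_funM; last first.
    by rewrite indE; exact: measurable_indic.
  exact/measurable_EFinP.
move=> w _ /=; rewrite lee_fin normrM indE indicE.
by case: (w \in A); rewrite ?normr1 ?normr0 ?mulr1 ?mulr0.
Qed.

Lemma Ex_add f g : integrableR f -> integrableR g ->
  Ex P (fun w => f w + g w) = Ex P f + Ex P g.
Proof.
move=> hf hg; apply: EFin_inj.
by rewrite EFinD !Ex_EFin ?integrableR_add // -integralD.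
Qed.

Lemma Ex_scale k f : integrableR f -> Ex P (fun w => k * f w) = k * Ex P f.
Proof.
move=> hf; apply: EFin_inj.
by rewrite EFinM !Ex_EFin ?integrableR_scale // -integralZl.
Qed.

Lemma Ex_sum (I : Type) (s : seq I) (p : pred I) (F : I -> Omega -> R) :
  (forall i, integrableR (F i)) ->
  Ex P (fun w => \sum_(i <- s | p i) F i w) = \sum_(i <- s | p i) Ex P (F i).
Proof.
move=> hF; elim: s => [|i s IH].
  by under eq_fun do rewrite big_nil; rewrite big_nil /Ex integral0.
under eq_fun do rewrite big_cons; rewrite big_cons -IH.
case: (p i) => //; exact: Ex_add (hF i) (integrableR_sum _ _ hF).
Qed.

Lemma Ex_subZ f g (b : R) : integrableR f -> integrableR g ->
  Ex P (fun w => f w - b * g w) = Ex P f - b * Ex P g.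
Proof.
move=> hf hg; rewrite (Ex_ext (g := fun w => f w + (- b) * g w)) => [|w]; last by ring.
by rewrite Ex_add ?Ex_scale ?integrableR_scale // mulNr.
Qed.

Lemma Ex_ind A : measurable A -> Ex P (ind A) = Pr P A.
Proof. by move=> mA; rewrite /Ex indE integral_indic // setIT. Qed.

Lemma integral_mulind Y A : measurable A ->
  (\int[P]_w (Y w * ind A w)%:E = \int[P]_(w in A) (Y w)%:E)%E.
Proof.
move=> mA; rewrite [RHS]integral_mkcond; apply: eq_integral => w _.
by rewrite /patch indE indicE; case: (w \in A); rewrite ?mulr1 ?mulr0.
Qed.

Lemma Ex_mulind_null Y A : measurable A -> integrableR Y -> Pr P A = 0 ->
  Ex P (fun w => Y w * ind A w) = 0.
Proof.
move=> mA hY PA0; rewrite /Ex integral_mulind // null_set_integral //.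
  exact/measurable_funTS/(measurable_int _ hY).
by have := Pr_EFin mA; rewrite PA0 => /esym h; exact: h.
Qed.

Lemma ind_setC (A : set Omega) w : ind (~` A) w = 1 - ind A w :> R.
Proof. by rewrite !indE !indicE in_setC; case: (w \in A); rewrite ?subrr ?subr0. Qed.

Lemma Pr_setC A : measurable A -> Pr P (~` A) = 1 - Pr P A.
Proof.
move=> mA; apply: EFin_inj; rewrite EFinB !Pr_EFin //; last exact: measurableC.
exact: probability_setC.
Qed.

Lemma condE_sub f g (b : R) A : measurable A -> integrableR f -> integrableR g ->
  condE P (fun w => f w - b * g w) A = condE P f A - b * condE P g A.
Proof.
move=> mA hf hg; rewrite /condE mulrA -mulrBl; congr (_ / _).
rewrite (Ex_ext (g := fun w => f w * ind A w - b * (g w * ind A w))) => [|w].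
  by rewrite Ex_subZ ?integrableR_mulind.
by ring.
Qed.

Lemma Ex_mul_centered_ind W A : measurable A -> integrableR W ->
  Pr P A != 0 -> Pr P (~` A) != 0 ->
  Ex P (fun w => W w * (ind A w - Pr P A)) =
  Pr P A * Pr P (~` A) * (condE P W A - condE P W (~` A)).
Proof.
move=> mA hW PA0 PAC0; have mAC := measurableC mA.
rewrite (Ex_ext (g := fun w => Pr P (~` A) * (W w * ind A w)
                             + (- Pr P A) * (W w * ind (~` A) w))); last first.
  by move=> w; rewrite ind_setC Pr_setC //; ring.
have hA := integrableR_mulind hW mA; have hAC := integrableR_mulind hW mAC.
rewrite Ex_add ?Ex_scale ?integrableR_scale //.
by rewrite /condE; field; rewrite PA0 PAC0.
Qed.

End Expectation.

Section MeasureChange.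
Context {R : realType} {d : measure_display} {T : measurableType d}.
Variable m : {measure set T -> \bar R}.
Local Open Scope ereal_scope.

Lemma integral_mrestr A (mA : measurable A) (f : T -> \bar R) :
  measurable_fun setT f -> \int[mrestr m mA]_x f x = \int[m]_(x in A) f x.
Proof.
move=> mf; rewrite -(setUv A) integral_setU //; last 3 first.
- exact: measurableC.
- by rewrite setUv.
- by rewrite disj_set2E setICr.
rewrite (null_set_integral (N := ~` A)) //; last 3 first.
- exact: measurableC.
- exact: measurable_funTS.
- by rewrite /= /mrestr setICl measure0.
rewrite adde0; apply: eq_measure_integral => B mB BA.
by rewrite /= /mrestr setIidl.
Qed.

Lemma integrable_mrestr A (mA : measurable A) (f : T -> \bar R) :
  m.-integrable setT f -> (mrestr m mA).-integrable setT f.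
Proof.
move=> mfi; have mf := measurable_int _ mfi; apply/integrableP; split => //.
rewrite integral_mrestr //; last exact: measurableT_comp.
by case/integrableP: (integrableS measurableT mA (@subsetT _ A) mfi).
Qed.

Lemma integral_mscale (k : {nonneg R}) (f : T -> \bar R) :
  m.-integrable setT f -> \int[mscale k m]_x f x = k%:num%:E * \int[m]_x f x.
Proof.
move=> mfi; have fpi := integrable_funepos measurableT mfi.
have fni := integrable_funeneg measurableT mfi.
rewrite [LHS]integralE.
rewrite (ge0_integral_mscale _ _ _ (measurable_int _ fpi)) //.
rewrite (ge0_integral_mscale _ _ _ (measurable_int _ fni)) //.
rewrite -muleBr -?integralE //.
by rewrite fin_num_adde_defl // fin_numN integrable_fin_num.
Qed.

End MeasureChange.

Section Independence.
Context {R : realType} {d : measure_display} {Omega : measurableType d}.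
Variable P : probability Omega R.

Lemma Ex_mulind_pushforward Y A (mA : measurable A) (mY : measurable_fun setT Y) :
  integrableR P Y ->
  (Ex P (fun w => Y w * ind A w))%:E = (\int[pushforward (mrestr P mA) Y]_y y%:E)%E.
Proof.
move=> hY; rewrite Ex_EFin ?integrableR_mulind // integral_mulind //.
rewrite integral_pushforward // preimage_setT; last first.
  by apply: integrable_mrestr; exact: hY.
by apply/esym/integral_mrestr; exact/measurable_EFinP.
Qed.

Lemma Ex_mulind_indep Y A C : measurable A -> measurable C -> integrableR P Y ->
  (forall B, measurable B ->
     P (Y @^-1` B `&` (A `&` C)) = ((Pr P C)%:E * P (Y @^-1` B `&` A))%E) ->
  Ex P (fun w => Y w * ind (A `&` C) w) = Pr P C * Ex P (fun w => Y w * ind A w).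
Proof.
(* The law of [Y] on [A `&` C] is [Pr P C] times its law on [A]. *)
move=> mA mC hY indepYC; have mY := integrableR_measurable hY.
have mAC := measurableI _ _ mA mC.
apply: EFin_inj; rewrite EFinM !Ex_mulind_pushforward //.
rewrite (eq_measure_integral (mscale (NngNum (Pr_ge0 P C))
  (pushforward (mrestr P mA) Y))); last first.
  by move=> B mB _; rewrite /= /mscale /pushforward /mrestr /=; exact: indepYC.
have hYA : (mrestr P mA).-integrable (Y @^-1` setT) (EFin \o Y).
  by rewrite preimage_setT; exact: integrable_mrestr.
by rewrite integral_mscale //; apply: (integrable_pushforward mY).
Qed.
End Independence.

Section Model.
Context {R : realType} {d : measure_display} {Omega : measurableType d}.
Variables (P : probability Omega R) (L : nat).
Variables (Y0 Y1 : Omega -> R) (Dt : Omega -> ctype L) (Z : Omega -> ivec L).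
Hypothesis reg : model_regular P Y0 Y1 Dt Z.

Local Notation Yo := (Yobs Y0 Y1 Dt Z).
Local Notation Do w := (bR (Dobs Dt Z w)).

Definition type_set (t : ctype L) : set Omega := [set w | Dt w = t].
Definition instr_set (z : ivec L) : set Omega := [set w | Z w = z].
Definition cell t z := type_set t `&` instr_set z.
Definition pz (z : ivec L) := Pr P (instr_set z).
Definition Ex_type (Y : Omega -> R) t := Ex P (fun w => Y w * ind (type_set t) w).

Lemma measurable_type_set t : measurable (type_set t).
Proof. by case: reg => _ [_ [mDt _]]; exact: mDt. Qed.

Lemma measurable_instr_set z : measurable (instr_set z).
Proof. by case: reg => _ [_ [_ mZ]]; exact: mZ. Qed.

Lemma measurable_cell t z : measurable (cell t z).
Proof. exact: measurableI (measurable_type_set t) (measurable_instr_set z). Qed.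

Lemma integrable_Y0 : integrableR P Y0. Proof. by case: reg. Qed.

Lemma integrable_Y1 : integrableR P Y1. Proof. by case: reg => _ []. Qed.

Lemma measurable_Zev l b : measurable (Zev Z l b).
Proof.
have -> : Zev Z l b = \bigcup_(z in [set z : ivec L | z l = b]) instr_set z.
  apply/seteqP; split => [w /= Zl|w [z /= zl Zz]]; first by exists (Z w).
  by move: Zz; rewrite /instr_set /Zev /= => ->.
apply: fin_bigcup_measurable; first exact: finite_finset.
by move=> z _; exact: measurable_instr_set.
Qed.

Lemma ind_Zev l b w : ind (Zev Z l b) w = (Z w l == b)%:R :> R.
Proof. by rewrite /ind; congr bR; apply/asboolP/eqP. Qed.

Lemma ind_instr_set z w : ind (instr_set z) w = (Z w == z)%:R :> R.
Proof. by rewrite /ind /instr_set; congr bR; apply/asboolP/eqP. Qed.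

Lemma ind_cell t z w : ind (cell t z) w = ((t == Dt w) && (z == Z w))%:R :> R.
Proof.
by rewrite /ind; congr bR; apply/asboolP/andP => [[/= -> ->]|[/eqP-> /eqP->]].
Qed.

Lemma cell_decomposition (c : ctype L -> ivec L -> R) Y w :
  c (Dt w) (Z w) * Y w = \sum_t \sum_z c t z * (Y w * ind (cell t z) w).
Proof.
transitivity (\sum_(t | t == Dt w) \sum_(z | z == Z w) c t z * Y w).
  by rewrite !big_pred1_eq.
rewrite big_mkcond; apply: eq_bigr => t _.
have [->|/negbTE tD] := eqVneq t (Dt w); last first.
  by rewrite big1 // => z _; rewrite ind_cell tD mulr0 mulr0.
rewrite big_mkcond; apply: eq_bigr => z _; rewrite ind_cell eqxx /=.
by case: eqP; rewrite ?mulr1 ?mulr0.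
Qed.

Lemma integrableR_cells c Y : integrableR P Y ->
  integrableR P (fun w => c (Dt w) (Z w) * Y w).
Proof.
move=> hY; rewrite (funext (cell_decomposition c Y)).
apply: integrableR_sum => t; apply: integrableR_sum => z.
exact/integrableR_scale/integrableR_mulind/measurable_cell.
Qed.

Lemma Yobs_cells w : Yo w = (1 - bR (Dt w (Z w))) * Y0 w + bR (Dt w (Z w)) * Y1 w.
Proof. by rewrite /Yobs /Dobs; case: (Dt w (Z w)); rewrite /bR /=; ring. Qed.

Lemma integrable_Yobs : integrableR P Yo.
Proof.
rewrite (funext Yobs_cells); apply: integrableR_add.
  exact: (integrableR_cells (fun t z => 1 - bR (t z)) integrable_Y0).
exact: (integrableR_cells (fun t z => bR (t z)) integrable_Y1).
Qed.

Lemma integrable_Dobs : integrableR P (fun w => Do w).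
Proof.
have := integrableR_cells (fun t z => bR (t z)) (integrableR_cst1 P).
by under eq_fun do rewrite mulr1.
Qed.

Lemma Zev_false l : Zev Z l false = ~` Zev Z l true.
Proof. by apply/seteqP; split => w; rewrite /Zev /=; case: (Z w l). Qed.

Lemma Pr_Zev l b : Pr P (Zev Z l b) = \sum_(z : ivec L | z l == b) pz z.
Proof.
rewrite -Ex_ind; last exact: measurable_Zev.
rewrite (Ex_ext P (g := fun w => \sum_(z : ivec L | z l == b) ind (instr_set z) w)).
  rewrite Ex_sum => [|z]; last exact/integrableR_ind/measurable_instr_set.
  by apply: eq_bigr => z _; exact/Ex_ind/measurable_instr_set.
move=> w; rewrite ind_Zev big_mkcond (bigD1 (Z w)) //= big1 => [|z].
  by rewrite ind_instr_set eqxx addr0; case: ifP.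
rewrite eq_sym => zZ.
by case: ifP; rewrite // ind_instr_set (negbTE zZ).
Qed.

Lemma Ex_Zl l : Ex P (fun w => bR (Z w l)) = pZ P Z l.
Proof.
rewrite /pZ -Ex_ind; last exact: measurable_Zev.
by apply: Ex_ext => w; rewrite ind_Zev eqb_id.
Qed.

Lemma var_Zl l :
  Ex P (fun w => bR (Z w l) * bR (Z w l)) - Ex P (fun w => bR (Z w l)) ^+ 2 =
  pZ P Z l * (1 - pZ P Z l).
Proof.
rewrite (Ex_ext P (g := fun w => bR (Z w l))) ?Ex_Zl; first by ring.
by move=> w; rewrite /bR; case: (Z w l); rewrite ?mulr1 ?mulr0.
Qed.

Lemma rhoZ_sub_piZ l (beta : R) :
  rhoZ P Y0 Y1 Dt Z l - beta * piZ P Dt Z l =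
  condE P (fun w => Yo w - beta * Do w) (Zev Z l true)
  - condE P (fun w => Yo w - beta * Do w) (Zev Z l false).
Proof.
rewrite !condE_sub ?integrable_Yobs ?integrable_Dobs //; try exact: measurable_Zev.
by rewrite /rhoZ /piZ; ring.
Qed.

Hypothesis A3 : A3_relevance P Dt Z.

Lemma Pr_Zev_gt0 l b : 0 < Pr P (Zev Z l b).
Proof.
case: A3 => pos PD; case: b; first by case: (pos l).
rewrite Zev_false Pr_setC; last exact: measurable_Zev.
have [pZ_gt0 _] := pos l; rewrite subr_gt0 -subr_gt0 -(pmulr_rgt0 _ pZ_gt0).
have dl0 : delta_mx l 0 != 0 :> 'cV[R]_L.
  by apply/eqP => /matrixP/(_ l 0); rewrite !mxE !eqxx => /eqP; rewrite oner_eq0.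
by have := PD _ dl0; rewrite trmx_delta -rowE -colE !mxE -expr2 var_Zl.
Qed.

Lemma overid_momentE l (beta : R) :
  Ex P (fun w => (Yo w - beta * Do w) * (bR (Z w l) - pZ P Z l)) =
  pZ P Z l * (1 - pZ P Z l) * (rhoZ P Y0 Y1 Dt Z l - beta * piZ P Dt Z l).
Proof.
have mZl := measurable_Zev l true.
have hW : integrableR P (fun w => Yo w - beta * Do w).
  exact: integrableR_subZ integrable_Yobs integrable_Dobs.
rewrite rhoZ_sub_piZ Zev_false -Pr_setC // /pZ.
rewrite -(Ex_mul_centered_ind mZl hW); last 2 first.
- exact/lt0r_neq0/Pr_Zev_gt0.
- by rewrite -Zev_false; exact/lt0r_neq0/Pr_Zev_gt0.
by apply: Ex_ext => w; rewrite ind_Zev eqb_id.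
Qed.

Lemma overid_moment_eq0 l (beta : R) :
  Ex P (fun w => (Yo w - beta * Do w) * (bR (Z w l) - pZ P Z l)) = 0 <->
  rhoZ P Y0 Y1 Dt Z l - beta * piZ P Dt Z l = 0.
Proof.
have pZ_gt0 := Pr_Zev_gt0 l true.
have pZC_gt0 : 0 < 1 - pZ P Z l.
  by rewrite /pZ -Pr_setC -?Zev_false ?Pr_Zev_gt0 //; exact: measurable_Zev.
have nz : pZ P Z l * (1 - pZ P Z l) != 0 by rewrite mulf_neq0 ?lt0r_neq0.
rewrite overid_momentE; split => [/eqP|->]; last by rewrite mulr0.
by rewrite mulf_eq0 (negbTE nz) => /eqP.
Qed.

Lemma qZE l b (z : ivec L) : z l = b -> qZ P Z l b z = pz z / Pr P (Zev Z l b).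
Proof.
move=> zl; rewrite /qZ; congr (Pr P _ / _); apply/seteqP; split => w /=.
  case=> Zl hZ; apply/ffunP => j.
  by case: (eqVneq j l) => [->|jl]; [rewrite Zl zl | exact: hZ].
by move=> ->; split.
Qed.

Lemma qZ_setc l b c (z : ivec L) : qZ P Z l b (setc z l c) = qZ P Z l b z.
Proof.
have e j : j != l -> setc z l c j = z j by move=> jl; rewrite /setc ffunE (negbTE jl).
rewrite /qZ; congr (Pr P _ / _); apply/seteqP.
by split => w /= [Zl hZ]; split => // j jl; rewrite ?hZ ?e // -e // hZ.
Qed.

Lemma sum_qZ l b : Pr P (Zev Z l b) != 0 ->
  \sum_(z : ivec L | z l == b) qZ P Z l b z = 1.
Proof.
move=> nz; rewrite (eq_bigr (fun z => pz z / Pr P (Zev Z l b))) => [|z /eqP].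
  by rewrite -mulr_suml -Pr_Zev divff.
exact: qZE.
Qed.

Definition Zl_mean l b (g : ivec L -> R) :=
  \sum_(z : ivec L | z l == b) qZ P Z l b z * g z.

Lemma Zl_mean_affine l b (a c : ctype L -> R) : Pr P (Zev Z l b) != 0 ->
  Zl_mean l b (fun z => \sum_t (a t + bR (t z) * c t)) =
  \sum_t a t + \sum_t c t * Zl_mean l b (fun z => bR (t z)).
Proof.
move=> nz; rewrite /Zl_mean (eq_bigr (fun z => \sum_t qZ P Z l b z * a t
    + \sum_t c t * (qZ P Z l b z * bR (t z)))); last first.
  by move=> z _; rewrite mulr_sumr -big_split; apply: eq_bigr => t _ /=; ring.
rewrite big_split /=; congr (_ + _); rewrite exchange_big; apply: eq_bigr => t _.
  by rewrite -mulr_suml sum_qZ // mul1r.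
by rewrite mulr_sumr.
Qed.

Lemma sum_setc l b (F : ivec L -> R) :
  \sum_(z : ivec L | ~~ z l) F (setc z l b) = \sum_(z : ivec L | z l == b) F z.
Proof.
(* [h] flips coordinate [l] iff [b]: an involution mapping [~~ z l] onto [z l == b]. *)
pose h (z : ivec L) := setc z l (z l (+) b).
have hK : involutive h.
  move=> z; apply/ffunP => j; rewrite /h /setc !ffunE.
  by case: eqP => [->|//]; rewrite eqxx addbK.
rewrite [RHS](reindex h) /=; last by exists h => z _; exact: hK.
apply: eq_big => z; first by rewrite /h /setc ffunE eqxx; case: (z l); case: (b).
by move=> /negbTE zl; rewrite /h zl.
Qed.

Lemma phiT_Zl_mean t l :
  phiT P Z t l =
  Zl_mean l true (fun z => bR (t z)) - Zl_mean l false (fun z => bR (t z)).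
Proof.
rewrite /phiT sumrB /Zl_mean -!sum_setc.
by congr (_ - _); apply: eq_bigr => z _; rewrite qZ_setc mulrC.
Qed.

Lemma Ex_type_cst1 t : Ex_type (fun=> 1) t = theta P Dt t.
Proof.
rewrite /Ex_type (Ex_ext P (g := ind (type_set t))) => [|w]; last by rewrite mul1r.
exact/Ex_ind/measurable_type_set.
Qed.

Lemma Ex_type_LATE t : Ex_type Y1 t - Ex_type Y0 t = theta P Dt t * LATE P Y0 Y1 Dt t.
Proof.
have mt := measurable_type_set t; rewrite /LATE /condE -/(theta P Dt t).
rewrite (Ex_ext P (g := fun w => Y1 w * ind (type_set t) w
                              - 1 * (Y0 w * ind (type_set t) w))) => [|w]; last by ring.
rewrite Ex_subZ ?integrableR_mulind ?integrable_Y0 ?integrable_Y1 // mul1r.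
have [th0|th0] := eqVneq (theta P Dt t) 0; last by rewrite mulrCA divff // mulr1.
by rewrite th0 mul0r /Ex_type !Ex_mulind_null ?subrr // ?integrable_Y0 ?integrable_Y1.
Qed.

Definition indep_of_Z (Y : Omega -> R) := forall B t z, measurable B ->
  P (Y @^-1` B `&` cell t z) = ((pz z)%:E * P (Y @^-1` B `&` type_set t))%E.

Lemma Ex_cells c Y : integrableR P Y -> indep_of_Z Y ->
  Ex P (fun w => c (Dt w) (Z w) * Y w) =
  \sum_t \sum_z c t z * pz z * Ex_type Y t.
Proof.
move=> hY indepY; have hYcell t z := integrableR_mulind hY (measurable_cell t z).
rewrite (Ex_ext P (cell_decomposition c Y)) Ex_sum => [|t]; last first.
  by apply: integrableR_sum => z; exact: integrableR_scale.
apply: eq_bigr => t _; rewrite Ex_sum => [|z]; last exact: integrableR_scale.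
apply: eq_bigr => z _; rewrite Ex_scale // -mulrA; congr (_ * _).
apply: Ex_mulind_indep (measurable_type_set t) (measurable_instr_set z) hY _.
by move=> B mB; exact: (indepY B t z mB).
Qed.

Hypothesis A1 : A1_indep P Y0 Y1 Dt Z.

Lemma A1_cell B0 B1 t z : measurable B0 -> measurable B1 ->
  P (Y0 @^-1` B0 `&` Y1 @^-1` B1 `&` cell t z) =
  ((pz z)%:E * P (Y0 @^-1` B0 `&` Y1 @^-1` B1 `&` type_set t))%E.
Proof.
move=> mB0 mB1.
have mY t' : measurable (Y0 @^-1` B0 `&` Y1 @^-1` B1 `&` type_set t').
  apply/measurableI/measurable_type_set/measurableI.
    exact: integrableR_preimage integrable_Y0 mB0.
  exact: integrableR_preimage integrable_Y1 mB1.
rewrite setIA -!Pr_EFin //; last exact/measurableI/measurable_instr_set.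
rewrite -EFinM mulrC; congr _%:E.
have -> : Y0 @^-1` B0 `&` Y1 @^-1` B1 `&` type_set t `&` instr_set z =
  [set w | B0 (Y0 w) /\ B1 (Y1 w) /\ Dt w = t /\ Z w = z].
  by apply/seteqP; split => w /=; tauto.
have -> : Y0 @^-1` B0 `&` Y1 @^-1` B1 `&` type_set t =
  [set w | B0 (Y0 w) /\ B1 (Y1 w) /\ Dt w = t].
  by apply/seteqP; split => w /=; tauto.
exact: A1.
Qed.

Lemma indep_of_Z_Y0 : indep_of_Z Y0.
Proof.
move=> B t z mB; have := A1_cell t z mB measurableT.
by rewrite preimage_setT !setIT.
Qed.

Lemma indep_of_Z_Y1 : indep_of_Z Y1.
Proof.
move=> B t z mB; have := A1_cell t z measurableT mB.
by rewrite preimage_setT !setTI.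
Qed.

Lemma indep_of_Z_cst1 : indep_of_Z (fun=> 1).
Proof.
move=> B t z _; rewrite preimage_cst; case: ifP => _; last first.
  by rewrite !set0I !measure0 mule0.
have := A1_cell t z measurableT measurableT.
by rewrite !preimage_setT !setIT !setTI.
Qed.

Lemma Ex_obs_Zev l b (beta : R) :
  Ex P (fun w => (Yo w - beta * Do w) * ind (Zev Z l b) w) =
  \sum_(z : ivec L | z l == b) pz z * \sum_t (Ex_type Y0 t
      + bR (t z) * (Ex_type Y1 t - Ex_type Y0 t - beta * theta P Dt t)).
Proof.
pose sel (z : ivec L) : R := (z l == b)%:R.
pose c0 t z := sel z * (1 - bR (t z)).
pose c1 t z := sel z * bR (t z).
pose c2 t z := - beta * (sel z * bR (t z)).
rewrite (Ex_ext P (g := fun w => c0 (Dt w) (Z w) * Y0 w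
    + (c1 (Dt w) (Z w) * Y1 w + c2 (Dt w) (Z w) * 1))); last first.
  move=> w; rewrite ind_Zev /Yobs /Dobs /c0 /c1 /c2 /sel.
  by case: (Dt w (Z w)); rewrite /bR /=; ring.
have hc0 := integrableR_cells c0 integrable_Y0.
have hc1 := integrableR_cells c1 integrable_Y1.
have hc2 := integrableR_cells c2 (integrableR_cst1 P).
rewrite !Ex_add ?integrableR_add //.
rewrite (Ex_cells c0 integrable_Y0 indep_of_Z_Y0).
rewrite (Ex_cells c1 integrable_Y1 indep_of_Z_Y1).
rewrite (Ex_cells c2 (integrableR_cst1 P) indep_of_Z_cst1).
have -> : \sum_(z : ivec L | z l == b) pz z * \sum_t (Ex_type Y0 t
      + bR (t z) * (Ex_type Y1 t - Ex_type Y0 t - beta * theta P Dt t)) =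
    \sum_z \sum_t sel z * pz z * (Ex_type Y0 t
      + bR (t z) * (Ex_type Y1 t - Ex_type Y0 t - beta * theta P Dt t)).
  rewrite big_mkcond; apply: eq_bigr => z _; rewrite /sel.
  case: ifP => _; last by rewrite big1 // => t _; rewrite !mul0r.
  by rewrite mulr_sumr; apply: eq_bigr => t _; rewrite mul1r.
rewrite -!big_split exchange_big; apply: eq_bigr => t _ /=.
rewrite -!big_split; apply: eq_bigr => z _ /=.
by rewrite Ex_type_cst1 /c0 /c1 /c2; ring.
Qed.

Lemma condE_obs_Zev l b (beta : R) : Pr P (Zev Z l b) != 0 ->
  condE P (fun w => Yo w - beta * Do w) (Zev Z l b) =
  Zl_mean l b (fun z => \sum_t (Ex_type Y0 t
      + bR (t z) * (Ex_type Y1 t - Ex_type Y0 t - beta * theta P Dt t))).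
Proof.
move=> nz; rewrite /condE Ex_obs_Zev mulr_suml /Zl_mean.
by apply: eq_bigr => z /eqP zl; rewrite qZE // mulrAC.
Qed.

Lemma rhoZ_sub_piZ_types l (beta : R) :
  rhoZ P Y0 Y1 Dt Z l - beta * piZ P Dt Z l =
  \sum_t theta P Dt t * (LATE P Y0 Y1 Dt t - beta) * phiT P Z t l.
Proof.
have nz b := lt0r_neq0 (Pr_Zev_gt0 l b).
rewrite rhoZ_sub_piZ !condE_obs_Zev // !Zl_mean_affine //.
rewrite [X in X - _]addrC addrKA -sumrB.
by apply: eq_bigr => t _; rewrite phiT_Zl_mean Ex_type_LATE; ring.
Qed.

Lemma late_moment_eq0 l (beta : R) :
  \sum_t alphaT P Dt Z t l * (LATE P Y0 Y1 Dt t - beta) = 0 <->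
  rhoZ P Y0 Y1 Dt Z l - beta * piZ P Dt Z l = 0.
Proof.
have [_ pi_gt0] := A3.1 l.
have -> : \sum_t alphaT P Dt Z t l * (LATE P Y0 Y1 Dt t - beta) =
    (rhoZ P Y0 Y1 Dt Z l - beta * piZ P Dt Z l) / piZ P Dt Z l.
  by rewrite rhoZ_sub_piZ_types mulr_suml; apply: eq_bigr => t _; rewrite /alphaT; ring.
split => [/eqP|->]; last by rewrite mul0r.
by rewrite mulf_eq0 invr_eq0 (negbTE (lt0r_neq0 pi_gt0)) orbF => /eqP.
Qed.

End Model.

Lemma common_ratio_iff (R : fieldType) (I : Type) (i0 : I) (rho pi : I -> R) :
  (forall i, pi i != 0) ->
  (exists b, forall i, rho i - b * pi i = 0) <->
  (forall i j, rho i / pi i = rho j / pi j).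
Proof.
move=> pi_nz; split => [[b hb] i j|eq_ratio].
  have ratio k : rho k / pi k = b.
    by rewrite -[rho k]subr0 -(hb k) opprB addrC subrK mulfK.
  by rewrite !ratio.
by exists (rho i0 / pi i0) => i; rewrite (eq_ratio i0 i) mulfVK ?subrr.
Qed.

Theorem proposition6 (R : realType) (d : measure_display) (Omega : measurableType d)
  (P : probability Omega R) (L : nat)
  (Y0 Y1 : Omega -> R) (Dt : Omega -> ctype L) (Z : Omega -> ivec L) :
  (2 <= L)%N ->
  model_regular P Y0 Y1 Dt Z ->
  A1_indep P Y0 Y1 Dt Z ->
  A2_monotone Dt ->
  A3_relevance P Dt Z ->
  (overid P Y0 Y1 Dt Z <-> wald_equal P Y0 Y1 Dt Z) /\
  (wald_equal P Y0 Y1 Dt Z <-> late_restriction P Y0 Y1 Dt Z).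
Proof.
move=> L2 reg A1 _ A3.
have pi_nz l : piZ P Dt Z l != 0 by have [_ /lt0r_neq0] := A3.1 l.
rewrite /wald_equal /Wald -(common_ratio_iff (Ordinal L2) _ pi_nz).
rewrite /overid /late_restriction.
by split; split=> -[b hb]; exists b => l;
  [ apply/(overid_moment_eq0 reg A3) | apply/(overid_moment_eq0 reg A3)
  | apply/(late_moment_eq0 reg A3 A1) | apply/(late_moment_eq0 reg A3 A1) ].
Qed.
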